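(* Let $P$ and $Q$ be irreducible transition matrices on the finite set $S$, both reversible with respect to $\pi$. If $P$ efficiency-dominates $Q$, then $P$ eigen-dominates $Q$.
   Context: $S$ is a finite set with $|S|=n$, and $\pi$ is a probability distribution on $S$ with $\pi(x)>0$ for all $x$. A transition matrix $P$ is reversible with respect to $\pi$ if $\pi(x)P(x,y)=\pi(y)P(y,x)$ for all $x,y$ (its eigenvalues are then real); irreducible if every state can be reached from every other with positive probability in some number of steps. For a Markov chain $X_1,X_2,\dots$ with transition matrix $P$ and $X_1\sim\pi$, $v(f,P)=\lim_{N\to\infty}\frac1N\mathrm{Var}\big(\sum_{i=1}^N f(X_i)\big)$. $P$ efficiency-dominates $Q$ if $v(f,P)\le v(f,Q)$ for all $f:S\to\mathbb R$. For reversible $P,Q$, $P$ eigen-dominates $Q$ if, writing the eigenvalues (with multiplicity) of $P$ as $\lambda_1\ge\dots\ge\lambda_n$ and those of $Q$ as $\beta_1\ge\dots\ge\beta_n$, we have $\lambda_i\le\beta_i$ for every $i$. *)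

From HB Require Import structures.
From mathcomp Require Import all_boot all_order all_algebra.
From mathcomp Require Import all_classical all_reals all_analysis.
Set Implicit Arguments. Unset Strict Implicit. Unset Printing Implicit Defensive.
Import Order.TTheory GRing.Theory Num.Theory.
Import numFieldNormedType.Exports.
Local Open Scope ring_scope.

(* The finite state space S with |S| = n is 'I_n. *)

Definition is_distribution (R : realType) (n : nat) (pi : 'I_n -> R) :=
  (forall x, 0 < pi x) /\ \sum_(x < n) pi x = 1.

Definition is_transition (R : realType) (n : nat) (P : 'M[R]_n) :=
  (forall x y, 0 <= P x y) /\ (forall x, \sum_(y < n) P x y = 1).

Definition reversible (R : realType) (n : nat) (pi : 'I_n -> R) (P : 'M[R]_n) :=
  forall x y, pi x * P x y = pi y * P y x.

Definition irreducible (R : realType) (n : nat) (P : 'M[R]_n) :=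
  forall x y, exists k : nat, 0 < (P ^+ k) x y.

(* Law of (X_1, ..., X_{N+1}) for the chain with X_1 ~ pi:
   P(X = x) = pi(x_1) * prod_i P(x_i, x_{i+1}). *)
Definition path_prob (R : realType) (n : nat) (pi : 'I_n -> R) (P : 'M[R]_n)
  (N : nat) (x : {ffun 'I_N.+1 -> 'I_n}) : R :=
  pi (x ord0) * \prod_(i < N) P (x (widen_ord (leqnSn N) i)) (x (lift ord0 i)).

Definition path_sum (R : realType) (n : nat) (f : 'I_n -> R)
  (N : nat) (x : {ffun 'I_N.+1 -> 'I_n}) : R := \sum_(i < N.+1) f (x i).

Definition var_sum (R : realType) (n : nat) (pi : 'I_n -> R) (P : 'M[R]_n)
  (f : 'I_n -> R) (N : nat) : R :=
  \sum_(x : {ffun 'I_N.+1 -> 'I_n}) path_prob pi P x * (path_sum f x) ^+ 2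
  - (\sum_(x : {ffun 'I_N.+1 -> 'I_n}) path_prob pi P x * path_sum f x) ^+ 2.

Definition asym_var (R : realType) (n : nat) (pi : 'I_n -> R) (P : 'M[R]_n)
  (f : 'I_n -> R) : R :=
  limn (fun N : nat => (N.+1%:R)^-1 * var_sum pi P f N).

Definition efficiency_dominates (R : realType) (n : nat) (pi : 'I_n -> R)
  (P Q : 'M[R]_n) :=
  forall f : 'I_n -> R, asym_var pi P f <= asym_var pi Q f.

(* lam is the nonincreasing list of eigenvalues of A with (algebraic) multiplicity *)
Definition sorted_eigenvalues (R : realType) (n : nat) (A : 'M[R]_n)
  (lam : 'I_n -> R) :=
  (forall i j : 'I_n, (i <= j)%N -> lam j <= lam i) /\
  char_poly A = \prod_(i < n) ('X - (lam i)%:P).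

Definition eigen_dominates (R : realType) (n : nat) (P Q : 'M[R]_n) :=
  exists lam beta : 'I_n -> R,
    [/\ sorted_eigenvalues P lam, sorted_eigenvalues Q beta &
        forall i, lam i <= beta i].

(* Reversibility makes the transition operators of P and Q self-adjoint for
   the inner product <g, h> = sum_x pi x g x h x.  For f of pi-mean zero, solve
   the Poisson equation f = u - P u; this is possible because P is irreducible,
   so that only the constants are P-harmonic.  Splitting a path at its last
   step and telescoping gives Var(f(X_1) + ... + f(X_N)) = N (2<u,f> - <f,f>)
   + O(1), hence v(f,P) = 2<u,f> - <f,f>.
   Given g, take f = g - Q g, for which v(f,Q) = 2<g,f> - <f,f>.  Efficiency
   dominance then says <u,f> <= <g,f>, and nonnegativity of the Dirichlet form
   of P at g - u turns this into <g, P g> <= <g, Q g>.  Conjugating by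
   diag(sqrt pi) makes P and Q symmetric without changing their spectra, and a
   Courant-Fischer argument compares their sorted eigenvalues. *)

From HB Require Import structures.
From mathcomp Require Import all_boot all_order all_algebra.
From mathcomp Require Import all_classical all_reals all_analysis.
From mathcomp Require Import fingroup perm complex ring lra zify.
Import Order.TTheory GRing.Theory Num.Theory.
Set Implicit Arguments. Unset Strict Implicit. Unset Printing Implicit Defensive.
Local Open Scope ring_scope.

(** * Sorted spectra of symmetric matrices *)

Lemma nonincreasing_perm (disp : Order.disp_t) (T : orderType disp) n (d : 'I_n -> T) :
  exists s : 'S_n, forall i j : 'I_n, (i <= j)%N -> (d (s j) <= d (s i))%O.
Proof.
case: n d => [|n] d; first by exists 1%g => -[].
pose r := [rel i j : 'I_n.+1 | (d j <= d i)%O].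
have r_trans : transitive r by move=> j i k /= ji kj; exact: le_trans kj ji.
have r_total : total r by move=> i j /=; exact: le_total.
pose l := sort r (enum 'I_n.+1).
have size_l : size l = n.+1 by rewrite size_sort size_enum_ord.
have nth_inj : injective (fun k : 'I_n.+1 => nth ord0 l k).
  move=> i j /eqP; rewrite nth_uniq ?size_l ?ltn_ord ?sort_uniq ?enum_uniq //.
  by move/eqP/val_inj.
exists (perm nth_inj) => i j ij; rewrite !permE.
have := sorted_leq_nth r_trans (fun i : 'I_n.+1 => le_refl (d i)) ord0
  (sort_sorted r_total (enum 'I_n.+1)).
by move=> /(_ i j); rewrite !inE size_l !ltn_ord => /(_ isT isT ij).
Qed.

Lemma char_poly_conj (F : fieldType) n (V W A : 'M[F]_n) :
  V *m W = 1%:M -> char_poly (V *m A *m W) = char_poly A.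
Proof.
move=> VW; rewrite /char_poly /char_poly_mx.
set V' := map_mx polyC V; set W' := map_mx polyC W.
have VW' : V' *m W' = 1%:M by rewrite -map_mxM VW map_mx1.
have XC : V' *m ('X%:M : 'M[{poly F}]_n) *m W' = 'X%:M.
  by rewrite mul_mx_scalar -scalemxAl VW' scalemx1.
rewrite !map_mxM -/V' -/W' -[in LHS]XC -mulmxBl -mulmxBr.
by rewrite !det_mulmx mulrAC -det_mulmx VW' det1 mul1r.
Qed.

Lemma bilin_mxE (T : comNzRingType) n (x : 'rV[T]_n) (M : 'M[T]_n) (z : 'cV[T]_n) :
  (x *m M *m z) 0 0 = \sum_i \sum_j x 0 i * M i j * z j 0.
Proof.
rewrite mxE (eq_bigr (fun j => \sum_i x 0 i * M i j * z j 0)) 1?exchange_big //.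
by move=> j _; rewrite !mxE big_distrl.
Qed.

Local Open Scope sesquilinear_scope.

Section UnitaryRows.
Variable C : numClosedFieldType.

Lemma rowsub_unitary m n (f : 'I_m -> 'I_n) (U : 'M[C]_n) : injective f ->
  U \is unitarymx -> rowsub f U \is unitarymx.
Proof.
move=> f_inj U_unitary; rewrite rowsubE mul_unitarymx //.
apply/unitarymxP/matrixP => i j; rewrite !mxE (bigD1 (f i)) //= big1.
  rewrite !mxE eqxx (inj_eq f_inj) eq_sym mul1r addr0.
  by case: eqP; rewrite ?conjC1 ?conjC0.
by move=> l /negbTE fil; rewrite !mxE eq_sym fil mul0r.
Qed.

Lemma dotmx_rowsub m n (f : 'I_m -> 'I_n) (U : 'M[C]_n) (v : 'rV_m) :
  injective f -> U \is unitarymx ->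
  dotmx (v *m rowsub f U) (v *m rowsub f U) = \sum_j v 0 j * (v 0 j)^*.
Proof.
move=> f_inj U_unitary; rewrite dotmxE trmx_mul map_mxM mulmxA mulmxtVK.
  by rewrite mxE; apply: eq_bigr => j _; rewrite !mxE.
exact: rowsub_unitary.
Qed.

Lemma spectral_conj_rowsub m n p (f : 'I_m -> 'I_n) (U : 'M[C]_n) (d : 'rV_n)
    (v : 'M[C]_(p, m)) : injective f -> U \is unitarymx ->
  (v *m rowsub f U) *m (U^t* *m diag_mx d *m U) *m (v *m rowsub f U)^t* =
  v *m diag_mx (\row_j d 0 (f j)) *m v^t*.
Proof.
move=> f_inj U_unitary; rewrite rowsubE !trmx_mul !map_mxM.
have UU : U *m U^t* = 1%:M by apply/unitarymxP.
rewrite !mulmxA -(mulmxA _ U) UU mulmx1 -(mulmxA _ U) UU mulmx1.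
congr (_ *m _); rewrite -!mulmxA; congr (_ *m _).
apply/matrixP => i j; rewrite mul_rowsub_mx mul1mx !mxE (bigD1 (f i)) //= big1.
  rewrite !mxE eqxx mulr1n addr0 (inj_eq f_inj) eq_sym.
  by case: eqP => [->|]; rewrite ?conjC1 ?conjC0 ?mulr1 ?mulr0 ?mulr1n ?mulr0n.
by move=> l /negbTE fil; rewrite !mxE eq_sym fil mulr0n mul0r.
Qed.

Lemma spectral_form_rowsub m n (f : 'I_m -> 'I_n) (U : 'M[C]_n) (a : 'I_n -> C)
    (v : 'rV_m) : injective f -> U \is unitarymx ->
  ((v *m rowsub f U) *m (U^t* *m diag_mx (\row_i a i) *m U) *m (v *m rowsub f U)^t*) 0 0
  = \sum_j v 0 j * (v 0 j)^* * a (f j).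
Proof.
move=> f_inj U_unitary; rewrite spectral_conj_rowsub // mul_mx_diag mxE.
by apply: eq_bigr => j _; rewrite !mxE mulrAC.
Qed.

End UnitaryRows.

Lemma capmx_neq0 (F : fieldType) m1 m2 n (V : 'M[F]_(m1, n)) (X : 'M[F]_(m2, n)) :
  (n < \rank V + \rank X)%N -> exists2 x : 'rV_n, x != 0 & (x <= V :&: X)%MS.
Proof.
move=> rVX; exists (nz_row (V :&: X)%MS); last exact: nz_row_sub.
rewrite nz_row_eq0 -mxrank_eq0 -lt0n.
by have := mxrank_sum_cap V X; have := rank_leq_col (V + X)%MS; lia.
Qed.

Lemma kermx_col_sub (F : fieldType) n (M : 'M[F]_n) (c : 'cV_n) :
  c != 0 -> M *m c = 0 -> (\rank (kermx M) <= 1)%N -> (kermx c <= M)%MS.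
Proof.
move=> c_neq0 Mc rk_kerM; have MK : (M <= kermx c)%MS by apply/sub_kermxP.
have rk_c : \rank c = 1%N.
  by apply/eqP; rewrite eqn_leq rank_leq_col lt0n mxrank_eq0.
rewrite -(mxrank_leqif_sup MK).2; have := mxrankS MK.
rewrite !mxrank_ker rk_c in rk_kerM *; have := rank_leq_row M; lia.
Qed.

Section CourantFischer.
Variables (C : numClosedFieldType) (n : nat) (U W : 'M[C]_n) (a b : 'I_n -> C).
Hypotheses (U_unitary : U \is unitarymx) (W_unitary : W \is unitarymx).
Hypotheses (a_sorted : forall i j : 'I_n, (i <= j)%N -> a j <= a i)
           (b_sorted : forall i j : 'I_n, (i <= j)%N -> b j <= b i).

Let A := U^t* *m diag_mx (\row_i a i) *m U.
Let B := W^t* *m diag_mx (\row_i b i) *m W.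

Lemma sorted_spectrum_le :
  (forall x : 'rV_n, (x *m A *m x^t*) 0 0 <= (x *m B *m x^t*) 0 0) ->
  forall k, a k <= b k.
Proof.
move=> AB k.
pose top (j : 'I_k.+1) := widen_ord (ltn_ord k) j.
have bot_lt (j : 'I_(n - k)) : (k + j < n)%N by have := ltn_ord j; lia.
pose bot j := Ordinal (bot_lt j).
have top_inj : injective top by move=> i j /(congr1 val) /= /val_inj.
have bot_inj : injective bot by move=> i j /(congr1 val) /= /addnI /val_inj.
(* The span of the top k+1 eigenvectors of A meets that of the bottom n-k
   eigenvectors of B. *)
have [x x_neq0] : exists2 x : 'rV_n, x != 0 & (x <= rowsub top U :&: rowsub bot W)%MS.
  apply: capmx_neq0.
  rewrite !mxrank_unitary ?rowsub_unitary //; have := ltn_ord k; lia.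
rewrite sub_capmx => /andP[/submxP[c xc] /submxP[e xe]].
have normU : dotmx x x = \sum_j c 0 j * (c 0 j)^* by rewrite xc dotmx_rowsub.
have normW : dotmx x x = \sum_j e 0 j * (e 0 j)^* by rewrite xe dotmx_rowsub.
have lo : a k * dotmx x x <= (x *m A *m x^t*) 0 0.
  rewrite normU xc spectral_form_rowsub // mulr_sumr; apply: ler_sum => j _.
  rewrite mulrC ler_wpM2l ?mul_conjC_ge0 //; apply: a_sorted.
  by rewrite /= -ltnS.
have hi : (x *m B *m x^t*) 0 0 <= b k * dotmx x x.
  rewrite normW xe spectral_form_rowsub // mulr_sumr; apply: ler_sum => j _.
  by rewrite [X in _ <= X]mulrC ler_wpM2l ?mul_conjC_ge0 // b_sorted //= leq_addr.
rewrite -(ler_pM2r (dotmx_is_dotmx x_neq0)).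
exact: le_trans lo (le_trans (AB x) hi).
Qed.

End CourantFischer.

Section RealSymmetric.
Variables (R : rcfType) (n : nat).
Local Notation "x %:C" := (real_complex R x) : ring_scope.
Local Notation mxC := (map_mx (real_complex R)).

Lemma complex_sum (I : finType) (F : I -> R[i]) :
  \sum_i F i = Complex (\sum_i complex.Re (F i)) (\sum_i complex.Im (F i)).
Proof. by elim/big_rec3: _ => //= i z u v _ ->; case: (F i). Qed.

Lemma real_sym_form_complexE (M : 'M[R]_n) (x : 'rV[R[i]]_n) : M^T = M ->
  let p := map_mx (@complex.Re R) x in let q := map_mx (@complex.Im R) x in
  (x *m mxC M *m x^t*) 0 0 = ((p *m M *m p^T) 0 0 + (q *m M *m q^T) 0 0)%:C.
Proof.
move=> M_sym p q; rewrite !bilin_mxE complex_sum -big_split /=.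
congr Complex.
  apply: eq_bigr => i _; rewrite -big_split complex_sum /=; apply: eq_bigr => j _.
  by rewrite !mxE; case: (x 0 i) => a b; case: (x 0 j) => c e /=; ring.
under eq_bigr => i _ do rewrite complex_sum /=.
(* The imaginary part is antisymmetric in (i, j). *)
have M_symE i j : M j i = M i j by rewrite -[M in LHS]M_sym mxE.
set S := (X in X = _).
have : S = - S.
  rewrite {1}/S exchange_big -sumrN; apply: eq_bigr => i _.
  rewrite -sumrN; apply: eq_bigr => j _; rewrite !mxE M_symE.
  by case: (x 0 i) => a b; case: (x 0 j) => c e /=; ring.
lra.
Qed.

Lemma real_sym_form_le_complex (A B : 'M[R]_n) : A^T = A -> B^T = B ->
  (forall y : 'rV[R]_n, (y *m A *m y^T) 0 0 <= (y *m B *m y^T) 0 0) ->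
  forall x : 'rV[R[i]]_n, (x *m mxC A *m x^t*) 0 0 <= (x *m mxC B *m x^t*) 0 0.
Proof. by move=> A_sym B_sym AB x; rewrite !real_sym_form_complexE // lecR lerD. Qed.

Lemma real_sym_sorted_spectral (A : 'M[R]_n) : A^T = A ->
  exists (U : 'M[R[i]]_n) (d : 'I_n -> R), [/\ U \is unitarymx,
    mxC A = U^t* *m diag_mx (\row_i (d i)%:C) *m U,
    char_poly A = \prod_i ('X - (d i)%:P) &
    forall i j : 'I_n, (i <= j)%N -> d j <= d i].
Proof.
move=> A_sym; have A_herm : mxC A \is hermsymmx.
  apply/is_hermitianmxP; rewrite expr0 scale1r; apply/matrixP => i j.
  by rewrite !mxE -[in LHS]A_sym mxE; apply/eqP; rewrite eq_complex /= oppr0 !eqxx.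
have /orthomx_spectralP A_spec := hermitian_normalmx A_herm.
have V_unitary := spectral_unitarymx (mxC A).
rewrite invmx_unitary // in A_spec.
set V := spectralmx _ in A_spec V_unitary; set sp := spectral_diag _ in A_spec.
have sp_real i : sp 0 i = (complex.Re (sp 0 i))%:C.
  by rewrite RRe_real //; exact: (mxOverP (hermitian_spectral_diag_real A_herm)).
have [s s_sorted] := nonincreasing_perm (fun i => complex.Re (sp 0 i)).
pose U := rowsub s V; pose d i := complex.Re (sp 0 (s i)).
have s_inj : injective s := @perm_inj _ s.
have U_unitary : U \is unitarymx by exact: rowsub_unitary.
have UtU : U^t* *m U = 1%:M by apply/mulmx1C/unitarymxP.
have A_diag : mxC A = U^t* *m diag_mx (\row_i (d i)%:C) *m U.
  have := spectral_conj_rowsub sp 1%:M s_inj V_unitary.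
  rewrite !mul1mx trmx1 map_mx1 mulmx1 -A_spec => UAU.
  transitivity (U^t* *m (U *m mxC A *m U^t*) *m U).
    by rewrite !mulmxA UtU mul1mx mulmxKtV.
  by rewrite UAU; congr (_ *m diag_mx _ *m _); apply/rowP => i; rewrite !mxE -sp_real.
exists U, d; split => //.
apply: (@map_poly_inj _ _ (real_complex R)).
rewrite map_char_poly A_diag char_poly_conj // char_poly_trig ?diag_mx_is_trig //.
rewrite rmorph_prod; apply: eq_bigr => i _.
by rewrite !mxE eqxx mulr1n rmorphB /= map_polyX map_polyC.
Qed.

End RealSymmetric.

Lemma form_le_eigen_dominates (R : realType) n (A B : 'M[R]_n) : A^T = A -> B^T = B ->
  (forall y : 'rV[R]_n, (y *m A *m y^T) 0 0 <= (y *m B *m y^T) 0 0) ->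
  eigen_dominates A B.
Proof.
move=> A_sym B_sym AB.
have [U [a [U_unitary A_spec A_char a_sorted]]] := real_sym_sorted_spectral A_sym.
have [W [b [W_unitary B_spec B_char b_sorted]]] := real_sym_sorted_spectral B_sym.
exists a, b; split => // k; rewrite -lecR.
apply: (@sorted_spectrum_le _ _ U W (real_complex R \o a) (real_complex R \o b)) =>
  // [i j ij|i j ij|x].
- by rewrite lecR a_sorted.
- by rewrite lecR b_sorted.
by rewrite -A_spec -B_spec; exact: real_sym_form_le_complex.
Qed.

(** * Transition operators *)

Definition markov_op (R : realType) n (P : 'M[R]_n) (g : 'I_n -> R) : 'I_n -> R :=
  fun y => \sum_z P y z * g z.

Definition pi_dot (R : realType) n (pi : 'I_n -> R) (g h : 'I_n -> R) : R :=
  \sum_x pi x * g x * h x.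

Section MarkovOperator.
Variables (R : realType) (n : nat).
Implicit Types (P Q : 'M[R]_n) (pi g h : 'I_n -> R).

Lemma markov_opB P g h : markov_op P (g - h) = markov_op P g - markov_op P h.
Proof.
apply/funext => y; rewrite /markov_op.
rewrite -[RHS]/(\sum_z P y z * g z - \sum_z P y z * h z) -sumrB.
by apply: eq_bigr => z _; rewrite -mulrBr.
Qed.

Lemma markov_opM P Q g : markov_op (P *m Q) g = markov_op P (markov_op Q g).
Proof.
apply/funext => y; rewrite /markov_op.
under eq_bigr => z _ do rewrite mxE mulr_suml.
rewrite exchange_big; apply: eq_bigr => w _ /=; rewrite mulr_sumr.
by apply: eq_bigr => z _; rewrite mulrA.
Qed.

Lemma markov_op1 g : markov_op 1%:M g = g.
Proof.
apply/funext => y; rewrite /markov_op (bigD1 y) //= big1 => [|z /negbTE zy].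
  by rewrite mxE eqxx mul1r addr0.
by rewrite mxE eq_sym zy mul0r.
Qed.

Lemma markov_op_exprS P k g :
  markov_op (P ^+ k.+1) g = markov_op P (markov_op (P ^+ k) g).
Proof. by rewrite exprS -markov_opM. Qed.

Lemma markov_op_exprSr P k g :
  markov_op (P ^+ k.+1) g = markov_op (P ^+ k) (markov_op P g).
Proof. by rewrite exprSr -markov_opM. Qed.

Lemma is_transition_mul P Q :
  is_transition P -> is_transition Q -> is_transition (P *m Q).
Proof.
move=> [P_ge0 P_sum] [Q_ge0 Q_sum]; split => [x y|x].
  by rewrite mxE sumr_ge0 // => z _; rewrite mulr_ge0.
under eq_bigr => y _ do rewrite mxE.
rewrite exchange_big /=.
by under eq_bigr => z _ do rewrite -mulr_sumr Q_sum mulr1.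
Qed.

Lemma is_transition1 : is_transition (1%:M : 'M[R]_n).
Proof.
split => [x y|x]; first by rewrite mxE ler0n.
rewrite (bigD1 x) //= big1 => [|y /negbTE yx]; first by rewrite mxE eqxx addr0.
by rewrite mxE eq_sym yx.
Qed.

Lemma is_transition_expr P k : is_transition P -> is_transition (P ^+ k).
Proof.
move=> P_trans; elim: k => [|k IH]; first exact: is_transition1.
by rewrite exprS; exact: is_transition_mul.
Qed.

Lemma markov_op_const P (c : R) : is_transition P -> markov_op P (fun=> c) = fun=> c.
Proof.
by move=> [_ P_sum]; apply/funext => y; rewrite /markov_op -mulr_suml P_sum mul1r.
Qed.

Lemma markov_op_norm_le P g y : is_transition P ->
  `|markov_op P g y| <= \sum_z `|g z|.
Proof.
move=> [P_ge0 P_sum]; apply: le_trans (ler_norm_sum _ _ _) _; apply: ler_sum => z _.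
rewrite normrM ger0_norm // ler_piMl //.
by rewrite -(P_sum y) (bigD1 z) //= lerDl sumr_ge0.
Qed.

Lemma pi_dotC pi g h : pi_dot pi g h = pi_dot pi h g.
Proof. by apply: eq_bigr => x _; rewrite mulrAC. Qed.

Lemma pi_dotBr pi g h h' : pi_dot pi g (h - h') = pi_dot pi g h - pi_dot pi g h'.
Proof. by rewrite /pi_dot -sumrB; apply: eq_bigr => x _; rewrite -mulrBr. Qed.

Lemma pi_dotBl pi g g' h : pi_dot pi (g - g') h = pi_dot pi g h - pi_dot pi g' h.
Proof. by rewrite pi_dotC pi_dotBr !(pi_dotC _ h). Qed.

Lemma pi_dot_sumE pi g h : \sum_y pi y * (g y * h y) = pi_dot pi g h.
Proof. by apply: eq_bigr => y _; rewrite mulrA. Qed.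

End MarkovOperator.

Section Reversible.
Variables (R : realType) (n : nat) (pi : 'I_n -> R) (P : 'M[R]_n).
Hypotheses (P_trans : is_transition P) (P_rev : reversible pi P).
Implicit Types g h : 'I_n -> R.

Lemma pi_dot_markov_op g h : pi_dot pi g (markov_op P h) = pi_dot pi (markov_op P g) h.
Proof.
rewrite /pi_dot /markov_op.
under eq_bigr => x _ do rewrite mulr_sumr.
under [RHS]eq_bigr => x _ do rewrite mulr_sumr mulr_suml.
rewrite [RHS]exchange_big /=; apply: eq_bigr => x _; apply: eq_bigr => y _.
transitivity (pi x * P x y * g x * h y); first by ring.
by rewrite P_rev; ring.
Qed.

Lemma sum_pi_markov_op g : \sum_y pi y * markov_op P g y = \sum_y pi y * g y.
Proof.
rewrite /markov_op; under eq_bigr => y _ do rewrite mulr_sumr.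
rewrite exchange_big /=; apply: eq_bigr => z _.
under eq_bigr => y _ do rewrite mulrA P_rev -mulrA.
by rewrite -mulr_sumr -mulr_suml (proj2 P_trans) mul1r.
Qed.

Lemma dirichlet_ge0 g : (forall x, 0 <= pi x) -> 0 <= pi_dot pi g (g - markov_op P g).
Proof.
move=> pi_ge0; pose D := \sum_x \sum_y pi x * P x y * (g x * (g x - g y)).
have -> : pi_dot pi g (g - markov_op P g) = D.
  rewrite /pi_dot /D; apply: eq_bigr => x _.
  rewrite -[(g - _) x]/(g x - markov_op P g x) /markov_op.
  transitivity (\sum_y (pi x * g x * g x * P x y - pi x * g x * (P x y * g y))).
    by rewrite sumrB -!mulr_sumr (proj2 P_trans) mulr1 mulrBr.
  by apply: eq_bigr => y _; ring.
have D_swap : D = \sum_x \sum_y pi x * P x y * (g y * (g y - g x)).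
  by rewrite /D exchange_big; apply: eq_bigr => x _; apply: eq_bigr => y _; rewrite P_rev.
suff : 0 <= D + D by lra.
rewrite [X in X + _]D_swap /D -big_split sumr_ge0 // => x _.
rewrite -big_split sumr_ge0 // => y _ /=.
rewrite -mulrDr mulr_ge0 ?mulr_ge0 ?(proj1 P_trans) //.
by rewrite (_ : _ + _ = (g x - g y) ^+ 2) ?sqr_ge0 //; ring.
Qed.

End Reversible.

(** * The asymptotic variance *)

Section Paths.
Variables (n N : nat).

Definition path_rcons (x : {ffun 'I_N.+1 -> 'I_n}) (z : 'I_n) : {ffun 'I_N.+2 -> 'I_n} :=
  [ffun i : 'I_N.+2 => if (i < N.+1)%N then x (inord i) else z].

Lemma path_rconsE x z (i : 'I_N.+2) (j : 'I_N.+1) :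
  val i = val j -> path_rcons x z i = x j.
Proof.
by move=> ij; rewrite ffunE ij ltn_ord; congr (x _); apply: val_inj; rewrite /= inordK.
Qed.

Lemma path_rcons_last x z (i : 'I_N.+2) : val i = N.+1 -> path_rcons x z i = z.
Proof. by move=> iN; rewrite ffunE iN ltnn. Qed.

Lemma sum_path_rcons (R : nmodType) (F : {ffun 'I_N.+2 -> 'I_n} -> R) :
  \sum_y F y = \sum_x \sum_z F (path_rcons x z).
Proof.
rewrite pair_big /= (reindex (fun p => path_rcons p.1 p.2)) //=.
pose belast (y : {ffun 'I_N.+2 -> 'I_n}) := [ffun j => y (widen_ord (leqnSn _) j)].
apply: onW_bij; exists (fun y => (belast y, y ord_max)) => [[x z]|y] /=.
  congr pair; last exact: path_rcons_last.
  by apply/ffunP => j; rewrite ffunE (path_rconsE _ _ (j := j)).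
apply/ffunP => i; case: (ltnP i N.+1) => [iN|Ni].
  by rewrite (path_rconsE _ _ (j := Ordinal iN)) // ffunE; congr (y _); apply: val_inj.
have iE : i = N.+1 :> nat by have := ltn_ord i; lia.
by rewrite (path_rcons_last _ _ iE); congr (y _); apply: val_inj.
Qed.

Lemma sum_path1 (R : nmodType) (F : {ffun 'I_1 -> 'I_n} -> R) :
  \sum_y F y = \sum_z F [ffun=> z].
Proof.
rewrite (reindex (fun z => [ffun=> z])) //=.
apply: onW_bij; exists (fun y : {ffun 'I_1 -> 'I_n} => y ord0) => [z|y].
  by rewrite ffunE.
by apply/ffunP => i; rewrite ffunE (ord1 i).
Qed.

End Paths.

Definition path_expect (R : realType) n (pi : 'I_n -> R) (P : 'M[R]_n) N
  (F : {ffun 'I_N.+1 -> 'I_n} -> R) : R := \sum_x path_prob pi P x * F x.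

Section PathExpectation.
Variables (R : realType) (n : nat) (pi : 'I_n -> R) (P : 'M[R]_n).
Local Notation E := (path_expect pi P).

Lemma eq_path_expect N (F G : {ffun 'I_N.+1 -> 'I_n} -> R) :
  (forall x, F x = G x) -> E F = E G.
Proof. by move=> FG; apply: eq_bigr => x _; rewrite FG. Qed.

Lemma path_expectZ N (c : R) (F : {ffun 'I_N.+1 -> 'I_n} -> R) :
  E (fun x => c * F x) = c * E F.
Proof. by rewrite /path_expect mulr_sumr; apply: eq_bigr => x _; rewrite mulrCA. Qed.

Lemma path_expectD N (F G : {ffun 'I_N.+1 -> 'I_n} -> R) :
  E (fun x => F x + G x) = E F + E G.
Proof. by rewrite /path_expect -big_split; apply: eq_bigr => x _; rewrite mulrDr. Qed.

Lemma path_expect0 (F : {ffun 'I_1 -> 'I_n} -> R) : E F = \sum_z pi z * F [ffun=> z].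
Proof.
rewrite /path_expect sum_path1; apply: eq_bigr => z _.
by rewrite /path_prob big_ord0 mulr1 ffunE.
Qed.

Lemma path_prob_rcons N (x : {ffun 'I_N.+1 -> 'I_n}) z :
  path_prob pi P (path_rcons x z) = path_prob pi P x * P (x ord_max) z.
Proof.
rewrite /path_prob big_ord_recr /= (path_rconsE _ _ (j := ord0)) //.
rewrite (path_rconsE _ _ (j := ord_max)) //.
rewrite (path_rcons_last _ _ (i := lift ord0 ord_max)) //.
rewrite mulrA; congr (_ * _ * _); apply: eq_bigr => i _.
rewrite (path_rconsE _ _ (j := widen_ord (leqnSn N) i)) //.
by rewrite (path_rconsE _ _ (j := lift ord0 i)).
Qed.

Lemma path_expectS N (F : {ffun 'I_N.+2 -> 'I_n} -> R) :
  E F = E (fun x => \sum_z P (x ord_max) z * F (path_rcons x z)).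
Proof.
rewrite /path_expect sum_path_rcons; apply: eq_bigr => x _; rewrite mulr_sumr.
by apply: eq_bigr => z _; rewrite path_prob_rcons mulrA.
Qed.

Lemma path_sum_rcons (f : 'I_n -> R) N (x : {ffun 'I_N.+1 -> 'I_n}) z :
  path_sum f (path_rcons x z) = path_sum f x + f z.
Proof.
rewrite /path_sum big_ord_recr /= (path_rcons_last _ _ (i := ord_max)) //.
by congr (_ + _); apply: eq_bigr => i _; rewrite (path_rconsE _ _ (j := i)).
Qed.

Hypotheses (P_trans : is_transition P) (P_rev : reversible pi P).

Lemma path_expect_last N (phi : 'I_n -> R) :
  E (fun x : {ffun 'I_N.+1 -> 'I_n} => phi (x ord_max)) = \sum_y pi y * phi y.
Proof.
elim: N phi => [|N IH] phi; first by rewrite path_expect0; under eq_bigr do rewrite ffunE.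
rewrite path_expectS -(sum_pi_markov_op P_trans P_rev) -IH; apply: eq_path_expect => x.
by apply: eq_bigr => z _; rewrite (path_rcons_last _ _ (i := ord_max)).
Qed.

End PathExpectation.

Lemma limn_add_div_bounded (R : realType) (s B : R) (w : nat -> R) :
  (forall N, `|w N| <= B) -> limn (fun N => s + N.+1%:R^-1 * w N) = s.
Proof.
move=> w_bound; apply: cvg_lim => //.
apply: (squeeze_cvgr (f := fun N => s - B * harmonic N)
                     (h := fun N => s + B * harmonic N)).
- apply: nearW => N /=; have h_gt0 := harmonic_gt0 (R := R) N.
  have := w_bound N; rewrite ler_norml => /andP[wl wu].
  have : - (B * harmonic N) <= harmonic N * w N by rewrite mulrC -mulrN ler_pM2l.
  have : harmonic N * w N <= B * harmonic N by rewrite [B * _]mulrC ler_pM2l.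
  rewrite -[N.+1%:R^-1]/(harmonic N); lra.
- rewrite -{2}(subr0 s); apply: cvgB; first exact: cvg_cst.
  by rewrite -(mulr0 B); apply: cvgMl_tmp; exact: cvg_harmonic.
- rewrite -{2}(addr0 s); apply: cvgD; first exact: cvg_cst.
  by rewrite -(mulr0 B); apply: cvgMl_tmp; exact: cvg_harmonic.
Qed.

Section PoissonEquation.
Variables (R : realType) (n : nat) (pi : 'I_n -> R) (P : 'M[R]_n) (f u : 'I_n -> R).
Hypotheses (P_trans : is_transition P) (P_rev : reversible pi P).
Hypothesis f_poisson : f = u - markov_op P u.
Local Notation E := (path_expect pi P).
Local Notation a k := (pi_dot pi u (markov_op (P ^+ k) u)).

Lemma pi_dot_poisson_r k : pi_dot pi u (markov_op (P ^+ k) f) = a k - a k.+1.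
Proof. by rewrite f_poisson markov_opB pi_dotBr markov_op_exprSr. Qed.

Lemma pi_dot_poisson_l phi :
  pi_dot pi f phi = pi_dot pi u phi - pi_dot pi u (markov_op P phi).
Proof. by rewrite f_poisson pi_dotBl pi_dot_markov_op. Qed.

Lemma pi_dot_poisson_u : pi_dot pi u f = a 0 - a 1.
Proof. by rewrite -pi_dot_poisson_r expr0 markov_op1. Qed.

Lemma pi_dot_poisson_f : pi_dot pi f f = a 0 - 2 * a 1 + a 2.
Proof.
rewrite pi_dot_poisson_l pi_dot_poisson_u -[P in markov_op P f]expr1 pi_dot_poisson_r.
by ring.
Qed.

Lemma path_expect_sum_last N phi :
  E (fun x : {ffun 'I_N.+1 -> 'I_n} => path_sum f x * phi (x ord_max)) =
  pi_dot pi u phi - pi_dot pi u (markov_op (P ^+ N.+1) phi).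
Proof.
elim: N phi => [|N IH] phi.
  rewrite path_expect0 expr1 -pi_dot_poisson_l -pi_dot_sumE.
  by apply: eq_bigr => z _; rewrite /path_sum big_ord1 !ffunE.
rewrite path_expectS; transitivity (E (fun x : {ffun 'I_N.+1 -> 'I_n} =>
    path_sum f x * markov_op P phi (x ord_max)
    + markov_op P (fun z => f z * phi z) (x ord_max))).
  apply: eq_path_expect => x; rewrite /markov_op mulr_sumr -big_split.
  apply: eq_bigr => z _ /=.
  by rewrite path_sum_rcons (path_rcons_last _ _ (i := ord_max)) //; ring.
rewrite path_expectD IH path_expect_last // sum_pi_markov_op // -markov_op_exprSr /=.
by rewrite pi_dot_sumE pi_dot_poisson_l; ring.
Qed.

Lemma path_expect_sum N : E (fun x : {ffun 'I_N.+1 -> 'I_n} => path_sum f x) = 0.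
Proof.
transitivity (E (fun x : {ffun 'I_N.+1 -> 'I_n} => path_sum f x * 1)).
  by apply: eq_path_expect => x; rewrite mulr1.
rewrite (path_expect_sum_last N (fun=> 1)) markov_op_const ?subrr //.
exact: is_transition_expr.
Qed.

Lemma path_expect_sum_sqr N :
  E (fun x : {ffun 'I_N.+1 -> 'I_n} => path_sum f x ^+ 2) =
  N.+1%:R * (a 0 - a 2) - 2 * (a 1 - a N.+2).
Proof.
elim: N => [|N IH].
  rewrite path_expect0 (eq_bigr (fun z => pi z * (f z * f z))); last first.
    by move=> z _; rewrite /path_sum big_ord1 ffunE.
  by rewrite pi_dot_sumE pi_dot_poisson_f; ring.
rewrite path_expectS; transitivity (E (fun x : {ffun 'I_N.+1 -> 'I_n} =>
    path_sum f x ^+ 2 + 2 * (path_sum f x * markov_op P f (x ord_max))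
    + markov_op P (fun z => f z * f z) (x ord_max))).
  apply: eq_path_expect => x; rewrite /markov_op.
  transitivity (\sum_z (P (x ord_max) z * path_sum f x ^+ 2 +
     2 * (path_sum f x * (P (x ord_max) z * f z)) + P (x ord_max) z * (f z * f z))).
    by apply: eq_bigr => z _; rewrite path_sum_rcons; ring.
  by rewrite !big_split /= -mulr_suml (proj2 P_trans) mul1r -mulr_sumr -mulr_sumr.
rewrite !path_expectD path_expectZ IH path_expect_sum_last path_expect_last //.
rewrite sum_pi_markov_op //= pi_dot_sumE pi_dot_poisson_f -markov_op_exprSr.
rewrite -[P in markov_op P f]expr1 !pi_dot_poisson_r.
by rewrite -[N.+2]addn1 natrD; ring.
Qed.

Lemma var_sum_poisson N : var_sum pi P f N = N.+1%:R * (a 0 - a 2) - 2 * (a 1 - a N.+2).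
Proof.
rewrite -[LHS]/(E (fun x : {ffun 'I_N.+1 -> 'I_n} => path_sum f x ^+ 2)
                - E (fun x : {ffun 'I_N.+1 -> 'I_n} => path_sum f x) ^+ 2).
by rewrite path_expect_sum_sqr path_expect_sum expr0n subr0.
Qed.

Lemma asym_var_poisson : (forall x, 0 <= pi x) ->
  asym_var pi P f = 2 * pi_dot pi u f - pi_dot pi f f.
Proof.
move=> pi_ge0; pose B := \sum_x pi x * `|u x| * \sum_z `|u z|.
have a_bound k : `|a k| <= B.
  apply: le_trans (ler_norm_sum _ _ _) _; apply: ler_sum => x _.
  rewrite !normrM (ger0_norm (pi_ge0 x)) ler_wpM2l ?mulr_ge0 //.
  exact/markov_op_norm_le/is_transition_expr.
rewrite /asym_var (_ : (fun N => _) =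
    fun N => a 0 - a 2 + N.+1%:R^-1 * (2 * (a N.+2 - a 1))); last first.
  by apply/funext => N; rewrite var_sum_poisson; field; rewrite addrC natr1 pnatr_eq0.
rewrite (@limn_add_div_bounded _ _ (4 * B)) => [|N].
  by rewrite pi_dot_poisson_u pi_dot_poisson_f; ring.
rewrite normrM ger0_norm //.
by have := a_bound 1%N; have := a_bound N.+2; have := ler_normB (a N.+2) (a 1%N); lra.
Qed.

End PoissonEquation.

(** * Efficiency dominance orders the quadratic forms *)

Section Irreducible.
Variables (R : realType) (n : nat) (P : 'M[R]_n).
Hypotheses (P_trans : is_transition P) (P_irr : irreducible P).

Lemma harmonic_const (v : 'I_n -> R) : markov_op P v = v -> forall x y, v x = v y.
Proof.
move=> v_fix.
have v_fixk k : markov_op (P ^+ k) v = v.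
  by elim: k => [|k IH]; rewrite ?expr0 ?markov_op1 // markov_op_exprS IH.
suff v_max x0 : (forall i, v i <= v x0) -> forall y, v y = v x0.
  move=> x y; case: (@Order.TotalTheory.arg_maxP _ _ _ x xpredT v isT) => x0 _ x0_max.
  by rewrite !(v_max x0) // => i; apply: x0_max.
move=> x0_max y; have [k Pk_pos] := P_irr x0 y.
have [Pk_ge0 Pk_sum] := is_transition_expr k P_trans.
have sum0 : \sum_z (P ^+ k) x0 z * (v x0 - v z) = 0.
  under eq_bigr do rewrite mulrBr.
  rewrite sumrB -mulr_suml Pk_sum mul1r.
  by have := congr1 (fun g => g x0) (v_fixk k); rewrite /markov_op => ->; rewrite subrr.
have terms_ge0 z : true -> 0 <= (P ^+ k) x0 z * (v x0 - v z).
  by move=> _; rewrite mulr_ge0 ?subr_ge0.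
move: (psumr_eq0P terms_ge0 sum0 (i := y) isT) => /eqP.
by rewrite mulf_eq0 subr_eq0 (gt_eqF Pk_pos) /= => /eqP.
Qed.

End Irreducible.

Section PoissonSolvable.
Variables (R : realType) (n : nat) (pi : 'I_n -> R) (P : 'M[R]_n).
Hypotheses (pi_dist : is_distribution pi) (P_trans : is_transition P).
Hypotheses (P_rev : reversible pi P) (P_irr : irreducible P).

Lemma mul_row_generatorE (w : 'rV[R]_n) x :
  (w *m (1%:M - P)^T) 0 x = w 0 x - markov_op P (fun y => w 0 y) x.
Proof.
rewrite mxE; under eq_bigr => y _ do rewrite !mxE mulrBr.
rewrite sumrB (bigD1 x) //= big1 => [|y /negbTE yx]; last by rewrite eq_sym yx mulr0.
by rewrite eqxx mulr1 addr0; congr (_ - _); apply: eq_bigr => y _; rewrite mulrC.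
Qed.

Lemma poisson_solvable (f : 'I_n -> R) :
  \sum_y pi y * f y = 0 -> exists u, f = u - markov_op P u.
Proof.
move=> f_mean0; have [pi_gt0 pi_sum] := pi_dist.
case: (pickP (fun _ : 'I_n => true)) => [x0 _|no_state]; last first.
  by move: pi_sum; rewrite big_pred0 // => /eqP; rewrite eq_sym oner_eq0.
(* Row vectors are functions on states: [w *m M] is [w - P w] and [w *m c] is
   the pi-mean of [w]. *)
pose M := (1%:M - P)^T; pose c := \col_x pi x.
have c_neq0 : c != 0 by apply/eqP => /colP/(_ x0); rewrite !mxE => /eqP; rewrite gt_eqF.
have Mc : M *m c = 0.
  apply/colP => x; rewrite !mxE; under eq_bigr => y _ do rewrite !mxE mulrBl.
  rewrite sumrB (bigD1 x) //= big1 => [|y /negbTE yx]; last by rewrite yx mul0r.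
  rewrite eqxx mul1r addr0; under eq_bigr => y _ do rewrite mulrC -P_rev.
  by rewrite -mulr_sumr (proj2 P_trans) mulr1 subrr.
have rk_kerM : (\rank (kermx M) <= 1)%N.
  suff /mxrankS/leq_trans : (kermx M <= (const_mx 1 : 'rV[R]_n))%MS.
    by apply; exact: rank_leq_row.
  apply/row_subP => i; move: (row i _) (row_sub i (kermx M)) => w /sub_kermxP wM.
  have w_fix : markov_op P (fun y => w 0 y) = (fun y => w 0 y).
    apply/funext => x; apply/eqP; rewrite eq_sym -subr_eq0.
    by rewrite -mul_row_generatorE wM mxE.
  rewrite (_ : w = w 0 x0 *: const_mx 1) ?scalemx_sub //.
  by apply/rowP => y; rewrite !mxE mulr1 (harmonic_const P_trans P_irr w_fix y x0).
have /submxP[D fD] : (\row_y f y <= M)%MS.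
  apply: submx_trans (kermx_col_sub c_neq0 Mc rk_kerM).
  apply/sub_kermxP/rowP => i; rewrite !mxE -[RHS]f_mean0.
  by apply: eq_bigr => y _; rewrite !mxE mulrC.
exists (fun y => D 0 y); apply/funext => x.
by have /rowP/(_ x) := fD; rewrite mxE mul_row_generatorE.
Qed.

End PoissonSolvable.

Lemma efficiency_dominates_form_le (R : realType) n (pi : 'I_n -> R) (P Q : 'M[R]_n) :
  is_distribution pi -> is_transition P -> is_transition Q ->
  reversible pi P -> reversible pi Q -> irreducible P ->
  efficiency_dominates pi P Q ->
  forall g, pi_dot pi g (markov_op P g) <= pi_dot pi g (markov_op Q g).
Proof.
move=> pi_dist P_trans Q_trans P_rev Q_rev P_irr dom g.
have pi_ge0 x : 0 <= pi x by exact/ltW/(proj1 pi_dist).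
pose f := g - markov_op Q g.
have [u f_poisson] : exists u, f = u - markov_op P u.
  apply: (poisson_solvable pi_dist) => //.
  rewrite -[LHS]/(\sum_y pi y * (g y - markov_op Q g y)).
  by under eq_bigr do rewrite mulrBr; rewrite sumrB sum_pi_markov_op // subrr.
have := dom f; rewrite (asym_var_poisson P_trans P_rev f_poisson pi_ge0).
rewrite (asym_var_poisson Q_trans Q_rev (erefl f) pi_ge0) => v_le.
have dual : pi_dot pi u (g - markov_op P g) = pi_dot pi g f.
  by rewrite pi_dotC f_poisson pi_dotBl pi_dotBr pi_dot_markov_op.
have := dirichlet_ge0 P_trans P_rev (g - u) pi_ge0.
rewrite markov_opB (_ : g - u - _ = (g - markov_op P g) - f);
  last by rewrite f_poisson; ring.
rewrite pi_dotBl [pi_dot pi u _]pi_dotBr dual [pi_dot pi g (_ - f)]pi_dotBr.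
have := pi_dotBr pi g g (markov_op P g); have := pi_dotBr pi g g (markov_op Q g).
rewrite -/f; lra.
Qed.

(** * Symmetrization *)

Definition pi_sym (R : realType) n (pi : 'I_n -> R) (M : 'M[R]_n) : 'M[R]_n :=
  \matrix_(i, j) (Num.sqrt (pi i) * M i j / Num.sqrt (pi j)).

Section Symmetrization.
Variables (R : realType) (n : nat) (pi : 'I_n -> R).
Hypothesis pi_gt0 : forall x, 0 < pi x.
Local Notation s i := (Num.sqrt (pi i)).

Let s_neq0 i : s i != 0. Proof. by rewrite gt_eqF // sqrtr_gt0. Qed.

Lemma pi_sym_tr (M : 'M[R]_n) : reversible pi M -> (pi_sym pi M)^T = pi_sym pi M.
Proof.
move=> M_rev; apply/matrixP => i j; rewrite !mxE.
have si := s_neq0 i; have sj := s_neq0 j.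
rewrite (_ : _ / s i = s j ^+ 2 * M j i / (s i * s j)); last by field; apply/andP.
rewrite (_ : _ / s j = s i ^+ 2 * M i j / (s i * s j)); last by field; apply/andP.
by rewrite !sqr_sqrtr ?ltW // M_rev.
Qed.

Lemma char_poly_pi_sym (M : 'M[R]_n) : char_poly (pi_sym pi M) = char_poly M.
Proof.
pose D := diag_mx (\row_i s i); pose D' := diag_mx (\row_i (s i)^-1).
have DD' : D *m D' = 1%:M.
  apply/matrixP => i j; rewrite mul_diag_mx !mxE.
  by case: eqP => [->|_]; rewrite ?mulr1n ?mulr0n ?mulr0 // mulfV.
rewrite -(char_poly_conj M DD'); congr char_poly.
by apply/matrixP => i j; rewrite mul_mx_diag mul_diag_mx !mxE.
Qed.

Lemma pi_sym_form (M : 'M[R]_n) (x : 'rV[R]_n) :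
  (x *m pi_sym pi M *m x^T) 0 0 =
  pi_dot pi (fun y => x 0 y / s y) (markov_op M (fun y => x 0 y / s y)).
Proof.
rewrite bilin_mxE; apply: eq_bigr => i _; rewrite /markov_op mulr_sumr.
apply: eq_bigr => j _; rewrite !mxE; set si := s i.
rewrite -[pi i](sqr_sqrtr (ltW (pi_gt0 i))) -/si.
by field; apply/andP; split; apply: s_neq0.
Qed.

End Symmetrization.

Theorem proposition5 (R : realType) (n : nat) (pi : 'I_n -> R) (P Q : 'M[R]_n) :
  is_distribution pi ->
  is_transition P -> is_transition Q ->
  reversible pi P -> reversible pi Q ->
  irreducible P -> irreducible Q ->
  efficiency_dominates pi P Q ->
  eigen_dominates P Q.
Proof.
move=> pi_dist P_trans Q_trans P_rev Q_rev P_irr _ dom.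
have pi_gt0 := proj1 pi_dist.
have PQ := efficiency_dominates_form_le pi_dist P_trans Q_trans P_rev Q_rev P_irr dom.
have [lam [beta [[lam_sorted P_char] [beta_sorted Q_char] lam_le]]] :
    eigen_dominates (pi_sym pi P) (pi_sym pi Q).
  apply: form_le_eigen_dominates; rewrite ?pi_sym_tr // => y.
  by rewrite !(pi_sym_form pi_gt0); apply: PQ.
exists lam, beta; rewrite /sorted_eigenvalues -(char_poly_pi_sym pi_gt0 P).
by rewrite -(char_poly_pi_sym pi_gt0 Q).
Qed.
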